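(* Let $\succcurlyeq$ be a preference relation on the set $\mathcal{B}$ of bets over a propositional language $\mathcal{L}$. The following are equivalent: (1) $\succcurlyeq$ satisfies Non-Triviality, Objective Expected Utility and Implication; (2) $\succcurlyeq$ is represented by a subjective model of uncertainty $(\Omega,t,\lambda)$ with $\lambda$ additive and $t$ monotone; (3) $\succcurlyeq$ is represented by a subjective model of uncertainty $(\Omega',t',\lambda')$ with $\lambda'$ monotone and $t'$ sound.
   Context: Let $\mathbb{P}$ be a set of propositional variables containing distinguished $\mathbf{T}$, $\mathbf{F}$, and $\mathcal{L}$ the language generated by $\neg,\land,\lor$. Write $\phi\implies\psi$ if $\psi$ is deducible from $\phi$ in classical propositional logic, and $\phi\iff\psi$ for mutual deducibility. A bet is a finitely supported $b:\mathcal{L}\to[0,1]$ summing to $1$; $b_\phi$ is the point-mass bet on $\phi$; the set $\mathcal{B}$ of bets is a mixture space under pointwise mixtures and $\succcurlyeq$ is a relation on it. A truth valuation on $\Omega$ is $t:\mathcal{L}\to2^\Omega$ with $t(\mathbf{T})=\Omega,t(\mathbf{F})=\emptyset$; exact: $\phi\iff\psi\Rightarrow t(\phi)=t(\psi)$; monotone: $\phi\implies\psi\Rightarrow t(\phi)\subseteq t(\psi)$; symmetric: $t(\neg\phi)=\Omega\setminus t(\phi)$; $\land$-distributive: $t(\phi\land\psi)=t(\phi)\cap t(\psi)$; sound: all four. A likelihood appraisal on a field $\Sigma\subseteq 2^\Omega$ is $\lambda:\Sigma\to[0,1]$ with $\lambda(\emptyset)=0,\lambda(\Omega)=1$; monotone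 if $A\subseteq B$ implies $\lambda(A)\le\lambda(B)$; additive if finitely additive. A subjective model $(\Omega,t,\lambda)$ ($\lambda$ on a field containing $t(\mathcal{L})$) represents $\succcurlyeq$ if $b\succcurlyeq b'\iff\sum_\phi b(\phi)\lambda(t(\phi))\ge\sum_\phi b'(\phi)\lambda(t(\phi))$. Non-Triviality: $b_{\mathbf{T}}\succcurlyeq b_\phi\succcurlyeq b_{\mathbf{F}}$ for all $\phi$ and $b_{\mathbf{T}}\succ b_{\mathbf{F}}$. Objective Expected Utility: $\succcurlyeq$ is complete, transitive, Archimedean and satisfies Independence. Implication: if $\phi\implies\psi$ then $b_\psi\succcurlyeq b_\phi$. *)

From HB Require Import structures.
From mathcomp Require Import all_boot all_order all_algebra.
From mathcomp Require Import all_classical all_reals.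
From Stdlib Require Import ClassicalEpsilon.
Set Implicit Arguments. Unset Strict Implicit. Unset Printing Implicit Defensive.
Import Order.TTheory GRing.Theory Num.Theory.
Local Open Scope classical_set_scope.
Local Open Scope ring_scope.

Inductive pform (P : Type) : Type :=
  | Var of P
  | Neg of pform P
  | And of pform P & pform P
  | Or of pform P & pform P.

Section Logic.
Variables (P : Type) (pT pF : P).

(* classical valuations, interpreting the distinguished variables T, F as true/false *)
Fixpoint evalf (v : P -> bool) (f : pform P) : bool :=
  match f with
  | Var p => v p
  | Neg g => ~~ evalf v g
  | And g h => evalf v g && evalf v h
  | Or g h => evalf v g || evalf v h
  end.

Definition admissible (v : P -> bool) := v pT = true /\ v pF = false.

Definition entails (phi psi : pform P) : Prop :=
  forall v, admissible v -> evalf v phi -> evalf v psi.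

Definition equiv (phi psi : pform P) : Prop := entails phi psi /\ entails psi phi.
End Logic.

Section Bets.
Variables (R : realType) (P : Type).
Local Notation pform := (pform P).

Definition is_supp (b : pform -> R) (s : seq pform) : Prop :=
  List.NoDup s /\ (forall phi, b phi != 0 -> List.In phi s).

Definition is_bet (b : pform -> R) : Prop :=
  (forall phi, 0 <= b phi <= 1) /\
  exists s, is_supp b s /\ \sum_(phi <- s) b phi = 1.

Definition supp (b : pform -> R) : seq pform :=
  epsilon (inhabits [::]) (is_supp b).

Definition eu (b : pform -> R) (u : pform -> R) : R :=
  \sum_(phi <- supp b) b phi * u phi.

Definition pm (phi : pform) : pform -> R :=
  fun psi => if `[< psi = phi >] then 1 else 0.

Definition mix (a : R) (b b' : pform -> R) : pform -> R :=
  fun phi => a * b phi + (1 - a) * b' phi.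

Variable pref : (pform -> R) -> (pform -> R) -> Prop.

Definition spref b b' := pref b b' /\ ~ pref b' b.

Definition complete_pref := forall b b', is_bet b -> is_bet b' -> pref b b' \/ pref b' b.

Definition transitive_pref := forall b b' b'', is_bet b -> is_bet b' -> is_bet b'' ->
  pref b b' -> pref b' b'' -> pref b b''.

Definition archimedean_pref := forall b b' b'', is_bet b -> is_bet b' -> is_bet b'' ->
  spref b b' -> spref b' b'' ->
  exists a c : R, [/\ 0 < a < 1, 0 < c < 1,
                      spref (mix a b b'') b' & spref b' (mix c b b'')].

Definition independence_pref := forall b b' b'' (a : R), is_bet b -> is_bet b' -> is_bet b'' ->
  0 < a <= 1 -> spref b b' -> spref (mix a b b'') (mix a b' b'').

Definition objective_EU := [/\ complete_pref, transitive_pref, archimedean_pref & independence_pref].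

Definition non_triviality (pT pF : P) :=
  (forall phi, pref (pm (Var pT)) (pm phi) /\ pref (pm phi) (pm (Var pF))) /\
  spref (pm (Var pT)) (pm (Var pF)).

Definition implication_ax (pT pF : P) :=
  forall phi psi, entails pT pF phi psi -> pref (pm psi) (pm phi).

Section Model.
Variables (pT pF : P) (Omega : Type) (t : pform -> set Omega).

Definition truth_valuation := t (Var pT) = setT /\ t (Var pF) = set0.
Definition t_exact := forall phi psi, equiv pT pF phi psi -> t phi = t psi.
Definition t_monotone := forall phi psi, entails pT pF phi psi -> t phi `<=` t psi.
Definition t_symmetric := forall phi, t (Neg phi) = ~` t phi.
Definition t_and_distributive := forall phi psi, t (And phi psi) = t phi `&` t psi.
Definition t_sound := [/\ t_exact, t_monotone, t_symmetric & t_and_distributive].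

Variables (Sigma : set (set Omega)) (lam : set Omega -> R).

Definition is_field := [/\ Sigma set0,
  (forall A, Sigma A -> Sigma (~` A)) &
  (forall A B, Sigma A -> Sigma B -> Sigma (A `|` B))].

Definition likelihood_appraisal :=
  [/\ forall A, Sigma A -> 0 <= lam A <= 1, lam set0 = 0 & lam setT = 1].
Definition lam_monotone := forall A B, Sigma A -> Sigma B -> A `<=` B -> lam A <= lam B.
Definition lam_additive := forall A B, Sigma A -> Sigma B -> A `&` B = set0 ->
  lam (A `|` B) = lam A + lam B.

Definition subjective_model := [/\ truth_valuation, is_field, (forall phi, Sigma (t phi))
  & likelihood_appraisal].

Definition represents := forall b b', is_bet b -> is_bet b' ->
  (pref b b' <-> eu b' (fun phi => lam (t phi)) <= eu b (fun phi => lam (t phi))).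
End Model.

End Bets.

From HB Require Import structures.
From mathcomp Require Import all_boot all_order all_algebra.
From mathcomp Require Import all_classical all_reals all_analysis.
From Stdlib Require Import ClassicalEpsilon.
From mathcomp Require Import ring lra.
Import Order.TTheory GRing.Theory Num.Theory.
Set Implicit Arguments. Unset Strict Implicit. Unset Printing Implicit Defensive.
Local Open Scope classical_set_scope.
Local Open Scope ring_scope.

(** All three conditions are equivalent to the existence of a utility [U] on
    formulas with [U T = 1], [U F = 0], [U] monotone under entailment, whose
    expected value represents the preference.  Given the axioms, [U phi] is the
    weight [u] for which the point bet on [phi] is indifferent to the mixture
    [u b_T + (1 - u) b_F]; it exists by a supremum argument using the Archimedean
    axiom, and induction on the support shows that every bet is indifferent to the
    mixture weighted by its expected utility.  Conversely such a [U] is realised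
    by an additive model, sending [phi] to the interval [[0, U phi)] measured by
    Lebesgue measure, and by a sound model on classical valuations, where
    [lambda (t phi) := U phi] is well defined because formulas with the same truth
    set are equivalent. *)

HB.instance Definition _ (P : Type) := gen_eqMixin (pform P).

Section Bets.
Variables (R : realType) (P : Type).
Implicit Types (b c : pform P -> R) (u : pform P -> R) (s : seq (pform P)).
Implicit Types (phi : pform P) (a : R).

Lemma In_mem phi s : List.In phi s <-> phi \in s.
Proof.
elim: s => [|psi s IH] //=; rewrite in_cons.
by split=> [[->|/IH->]|/orP[/eqP->|/IH]]; rewrite ?eqxx ?orbT; auto.
Qed.

Lemma NoDup_uniq s : List.NoDup s <-> uniq s.
Proof.
elim: s => [|phi s IH] /=; first by split=> // _; constructor.
split=> [h|/andP[/negP phi_s /IH s_nodup]].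
  by inversion h; apply/andP; split; [apply/negP; rewrite -In_mem | apply/IH].
by constructor; rewrite // In_mem.
Qed.

Lemma is_suppP b s : is_supp b s <-> uniq s /\ (forall phi, b phi != 0 -> phi \in s).
Proof.
split=> -[/NoDup_uniq s_uniq s_supp]; split=> // phi /s_supp /In_mem //.
Qed.

Lemma sum_is_supp_eq (F : pform P -> R) s1 s2 : is_supp F s1 -> is_supp F s2 ->
  \sum_(phi <- s1) F phi = \sum_(phi <- s2) F phi.
Proof.
move=> /is_suppP[u1 h1] /is_suppP[u2 h2]; apply: perm_big_supp.
apply: uniq_perm; rewrite ?filter_uniq // => phi; rewrite !mem_filter.
by case: (boolP (F phi != 0)) => // /[dup] /h1 -> /h2 ->.
Qed.

Lemma is_bet_supp b : is_bet b -> is_supp b (supp b).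
Proof. by case=> _ [s [s_supp _]]; apply: epsilon_spec; exists s. Qed.

Lemma sum_is_bet b s : is_bet b -> is_supp b s -> \sum_(phi <- s) b phi = 1.
Proof. by case=> _ [s' [s'_supp <-]] s_supp; exact: sum_is_supp_eq. Qed.

Lemma euE b u s : is_bet b -> is_supp b s -> eu b u = \sum_(phi <- s) b phi * u phi.
Proof.
have supp_mul s' : is_supp b s' -> is_supp (fun phi => b phi * u phi) s'.
  move=> /is_suppP[s'_uniq s'_supp]; apply/is_suppP; split=> // phi.
  by rewrite mulf_eq0 negb_or => /andP[/s'_supp].
by move=> /is_bet_supp b_supp s_supp; apply: sum_is_supp_eq; apply: supp_mul.
Qed.

Lemma is_betI b s : (forall phi, 0 <= b phi) -> is_supp b s ->
  \sum_(phi <- s) b phi = 1 -> is_bet b.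
Proof.
move=> b_ge0 /[dup] s_supp /is_suppP[s_uniq s_mem] s_sum; split; last by exists s.
move=> phi; rewrite b_ge0 /=; have [->|/s_mem phi_s] := eqVneq (b phi) 0; first exact: ler01.
by rewrite -s_sum (bigD1_seq phi) //= lerDl sumr_ge0.
Qed.

Lemma bet_ge0 b phi : is_bet b -> 0 <= b phi.
Proof. by case=> /(_ phi)/andP[]. Qed.

Lemma pmE phi psi : pm R phi psi = (psi == phi)%:R.
Proof. by rewrite /pm; case: asboolP => [->|/eqP/negbTE->]; rewrite ?eqxx. Qed.

Lemma pm_supp phi : is_supp (pm R phi) [:: phi].
Proof. by apply/is_suppP; split=> // psi; rewrite pmE mem_seq1 pnatr_eq0 eqb0 negbK. Qed.

Lemma is_bet_pm phi : is_bet (pm R phi).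
Proof.
by apply: (is_betI _ (pm_supp phi)) => [psi|]; rewrite ?big_seq1 pmE ?eqxx ?ler0n.
Qed.

Lemma eu_pm phi u : eu (pm R phi) u = u phi.
Proof. by rewrite (euE _ (is_bet_pm phi) (pm_supp phi)) big_seq1 pmE eqxx mul1r. Qed.

Lemma mix1 b c : mix 1 b c = b.
Proof. by apply/funext => phi; rewrite /mix; ring. Qed.

Lemma mix0 b c : mix 0 b c = c.
Proof. by apply/funext => phi; rewrite /mix; ring. Qed.

Lemma mix_idem a b : mix a b b = b.
Proof. by apply/funext => phi; rewrite /mix; ring. Qed.

Lemma mixC a b c : mix a b c = mix (1 - a) c b.
Proof. by apply/funext => phi; rewrite /mix; ring. Qed.

Lemma mix_mixl a e b c d : mix e (mix a b d) (mix a c d) = mix a (mix e b c) d.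
Proof. by apply/funext => phi; rewrite /mix; ring. Qed.

Lemma mix_supp a b c s1 s2 : is_supp b s1 -> is_supp c s2 ->
  [/\ is_supp b (undup (s1 ++ s2)), is_supp c (undup (s1 ++ s2))
    & is_supp (mix a b c) (undup (s1 ++ s2))].
Proof.
move=> /is_suppP[_ b_mem] /is_suppP[_ c_mem].
split; apply/is_suppP; split=> [|phi]; rewrite ?undup_uniq // mem_undup mem_cat.
- by move/b_mem ->.
- by move/c_mem ->; rewrite orbT.
have [/b_mem -> //|b0] := boolP (b phi != 0).
have [/c_mem ->|c0] := boolP (c phi != 0); first by rewrite orbT.
by rewrite /mix (eqP (negPn b0)) (eqP (negPn c0)) !mulr0 addr0 eqxx.
Qed.

Lemma is_bet_mix a b c : 0 <= a <= 1 -> is_bet b -> is_bet c -> is_bet (mix a b c).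
Proof.
move=> /andP[a_ge0 a_le1] b_bet c_bet.
case: (b_bet) => _ [s1 [s1_supp _]]; case: (c_bet) => _ [s2 [s2_supp _]].
have [b_supp c_supp bc_supp] := mix_supp a s1_supp s2_supp.
apply: (is_betI _ bc_supp) => [phi|].
  by rewrite addr_ge0 ?mulr_ge0 ?subr_ge0 ?(bet_ge0 phi b_bet) ?(bet_ge0 phi c_bet).
rewrite big_split -!mulr_sumr /= (sum_is_bet b_bet b_supp) (sum_is_bet c_bet c_supp).
by rewrite !mulr1 addrC subrK.
Qed.

Lemma eu_mix a b c u : 0 <= a <= 1 -> is_bet b -> is_bet c ->
  eu (mix a b c) u = a * eu b u + (1 - a) * eu c u.
Proof.
move=> a01 b_bet c_bet.
case: (b_bet) => _ [s1 [s1_supp _]]; case: (c_bet) => _ [s2 [s2_supp _]].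
have [b_supp c_supp bc_supp] := mix_supp a s1_supp s2_supp.
rewrite (euE u (is_bet_mix a01 b_bet c_bet) bc_supp) (euE u b_bet b_supp).
rewrite (euE u c_bet c_supp) !mulr_sumr -big_split /=; apply: eq_bigr => phi _.
by rewrite /mix; ring.
Qed.

Lemma eu01 b u : is_bet b -> (forall phi, 0 <= u phi <= 1) -> 0 <= eu b u <= 1.
Proof.
move=> b_bet u01; have b_supp := is_bet_supp b_bet.
rewrite (euE u b_bet b_supp) -(sum_is_bet b_bet b_supp) sumr_ge0 => [|phi _].
  by rewrite ler_sum // => phi _; case/andP: (u01 phi) => ? ?; rewrite ler_piMr ?(bet_ge0 _ b_bet).
by case/andP: (u01 phi) => ? ?; rewrite mulr_ge0 ?(bet_ge0 _ b_bet).
Qed.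

Lemma is_supp_cons0 b phi s : is_supp b (phi :: s) -> b phi = 0 -> is_supp b s.
Proof.
move=> /is_suppP[/andP[_ s_uniq] b_mem] b0; apply/is_suppP; split=> // psi b_psi.
move: (b_mem _ b_psi); rewrite in_cons => /orP[/eqP psi_phi|//].
by rewrite psi_phi b0 eqxx in b_psi.
Qed.

Lemma bet_pm b phi : is_bet b -> b phi = 1 -> b = pm R phi.
Proof.
move=> b_bet b1; have b_supp := is_bet_supp b_bet; have /is_suppP[s_uniq s_mem] := b_supp.
have phi_s : phi \in supp b by rewrite s_mem // b1 oner_eq0.
have := sum_is_bet b_bet b_supp; rewrite (bigD1_seq phi) //= b1 -{2}[1]addr0.
move=> /addrI/eqP; rewrite psumr_eq0 => [/allP rest0|psi _]; last exact: bet_ge0.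
apply/funext => psi; rewrite pmE; have [->//|psi_phi] := eqVneq psi phi.
have [//|/s_mem /rest0] := eqVneq (b psi) 0.
by rewrite psi_phi => /eqP.
Qed.

Definition bet_rest b phi : pform P -> R :=
  fun psi => if psi == phi then 0 else b psi / (1 - b phi).

Lemma bet_restE b phi : b phi != 1 -> b = mix (b phi) (pm R phi) (bet_rest b phi).
Proof.
move=> b1; apply/funext => psi; rewrite /mix /bet_rest pmE.
have [->|_] := eqVneq psi phi; first by rewrite mulr1 mulr0 addr0.
by rewrite mulr0 add0r mulrC divfK // subr_eq0 eq_sym.
Qed.

Lemma is_bet_rest b phi s : is_bet b -> is_supp b (phi :: s) -> b phi != 1 ->
  is_bet (bet_rest b phi) /\ is_supp (bet_rest b phi) s.
Proof.
move=> b_bet /[dup] b_supp /is_suppP[/andP[phi_s s_uniq] b_mem] b1.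
have b_lt1 : b phi < 1 by rewrite lt_neqAle b1; case: b_bet => /(_ phi)/andP[].
have rest_supp : is_supp (bet_rest b phi) s.
  apply/is_suppP; split=> // psi; rewrite /bet_rest.
  have [_|psi_phi] := eqVneq psi phi; first by rewrite eqxx.
  rewrite mulf_eq0 negb_or => /andP[/b_mem].
  by rewrite in_cons (negbTE psi_phi).
split=> //; apply: (is_betI _ rest_supp) => [psi|].
  rewrite /bet_rest; case: eqP => _; rewrite ?lexx //.
  by rewrite divr_ge0 ?(bet_ge0 _ b_bet) // subr_ge0 ltW.
have := sum_is_bet b_bet b_supp; rewrite big_cons => b_sum.
have -> : \sum_(psi <- s) bet_rest b phi psi = (\sum_(psi <- s) b psi) / (1 - b phi).
  rewrite mulr_suml; apply: eq_big_seq => psi psi_s; rewrite /bet_rest.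
  by have [psi_phi|//] := eqVneq psi phi; rewrite -psi_phi psi_s in phi_s.
by rewrite (_ : \sum_(psi <- s) b psi = 1 - b phi) ?divff ?subr_eq0 1?eq_sym //; lra.
Qed.

End Bets.

Lemma convex_combinations_around (R : realType) (x y z : R) : z < y -> y < x ->
  exists a c : R, [/\ 0 < a < 1, 0 < c < 1,
    y < a * x + (1 - a) * z & c * x + (1 - c) * z < y].
Proof.
move=> zy yx; have xz : 0 < x - z by rewrite subr_gt0 (lt_trans zy yx).
pose r := (y - z) / (x - z).
have ry : r * (x - z) = y - z by rewrite /r divfK // gt_eqF.
have r0 : 0 < r by rewrite /r divr_gt0 // subr_gt0.
have r1 : r < 1 by rewrite /r ltr_pdivrMr // mul1r ltrD2r.
by exists ((1 + r) / 2), (r / 2); split; lra.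
Qed.

Section Utility.
Variables (R : realType) (P : Type) (pT pF : P).
Variable pref : (pform P -> R) -> (pform P -> R) -> Prop.
Implicit Types (U : pform P -> R) (phi psi : pform P).

Definition eu_represents U := forall b b', is_bet b -> is_bet b' ->
  (pref b b' <-> eu b' U <= eu b U).

Definition monotone_utility U := [/\ U (Var pT) = 1, U (Var pF) = 0,
  forall phi psi, entails pT pF phi psi -> U phi <= U psi & eu_represents U].

Lemma entails_T phi : entails pT pF phi (Var pT).
Proof. by move=> v []. Qed.

Lemma entails_F phi : entails pT pF (Var pF) phi.
Proof. by move=> v [_ /= ->]. Qed.

Lemma monotone_utility01 U phi : monotone_utility U -> 0 <= U phi <= 1.
Proof.
case=> UT UF U_mono _; apply/andP; split.
  by rewrite -UF; apply/U_mono/entails_F.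
by rewrite -UT; apply/U_mono/entails_T.
Qed.

Lemma eu_represents_spref U b b' : eu_represents U -> is_bet b -> is_bet b' ->
  spref pref b b' <-> eu b' U < eu b U.
Proof.
move=> U_rep b_bet b'_bet; rewrite /spref (U_rep _ _ b_bet b'_bet) (U_rep _ _ b'_bet b_bet).
split=> [[_ /negP]|lt_eu]; first by rewrite ltNge.
by split; [exact: ltW | rewrite leNgt lt_eu].
Qed.

Lemma eu_represents_objective_EU U : eu_represents U -> objective_EU pref.
Proof.
move=> U_rep; have spE b b' := @eu_represents_spref U b b' U_rep.
split.
- move=> b b' b_bet b'_bet; rewrite (U_rep _ _ b_bet b'_bet) (U_rep _ _ b'_bet b_bet).
  exact/orP/le_total.
- move=> b b' b'' b_bet b'_bet b''_bet; rewrite !U_rep // => h1 h2.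
  exact: le_trans h2 h1.
- move=> b b' b'' b_bet b'_bet b''_bet; rewrite !spE // => h1 h2.
  have [a [c [/andP[a0 a1] /andP[c0 c1] above below]]] := convex_combinations_around h2 h1.
  have a01 : 0 <= a <= 1 by rewrite !ltW.
  have c01 : 0 <= c <= 1 by rewrite !ltW.
  have a_bet := is_bet_mix a01 b_bet b''_bet; have c_bet := is_bet_mix c01 b_bet b''_bet.
  by exists a, c; split; rewrite ?a0 ?a1 ?c0 ?c1 ?spE ?eu_mix.
- move=> b b' b'' a b_bet b'_bet b''_bet /andP[a0 a1].
  have a01 : 0 <= a <= 1 by rewrite ltW.
  have b_mix := is_bet_mix a01 b_bet b''_bet; have b'_mix := is_bet_mix a01 b'_bet b''_bet.
  by rewrite !spE // !eu_mix // => lt_eu; nra.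
Qed.

Lemma monotone_utility_axioms U : monotone_utility U ->
  [/\ non_triviality pref pT pF, objective_EU pref & implication_ax pref pT pF].
Proof.
move=> /[dup] U_01 [UT UF U_mono U_rep].
have pm_rep phi psi : pref (pm R phi) (pm R psi) <-> U psi <= U phi.
  by rewrite (U_rep _ _ (is_bet_pm _ _) (is_bet_pm _ _)) !eu_pm.
split; last by move=> phi psi /U_mono; rewrite pm_rep.
- split; first by move=> phi; rewrite !pm_rep UT UF; case/andP: (monotone_utility01 phi U_01).
  by rewrite (eu_represents_spref U_rep (is_bet_pm _ _) (is_bet_pm _ _)) !eu_pm UT UF ltr01.
- exact: eu_represents_objective_EU U_rep.
Qed.

End Utility.

Section UnitInterval.
Variable R : realType.

Definition unit_length (A : set R) : R := fine (lebesgue_measure (A `&` `[0, 1[%classic)).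

Lemma lebesgue_unit_interval : lebesgue_measure (`[0, 1[%classic : set R) = 1%E.
Proof. by rewrite lebesgue_measure_itv /= lte_fin ltr01 /= oppr0 adde0. Qed.

Lemma unit_length_itv (u : R) : 0 <= u <= 1 -> unit_length `[0, u[ = u.
Proof.
case/andP=> u0 u1; rewrite /unit_length setIidl; last first.
  by move=> x /=; rewrite !in_itv /= => /andP[-> xu]; rewrite (lt_le_trans xu u1).
rewrite lebesgue_measure_itv /= lte_fin.
by case: ltP => [_|u_le0] /=; [rewrite subr0 | apply/eqP; rewrite eq_le u0 u_le0].
Qed.

Lemma unit_lengthT : unit_length setT = 1.
Proof. by rewrite /unit_length setTI lebesgue_unit_interval. Qed.

Lemma unit_length0 : unit_length set0 = 0.
Proof. by rewrite /unit_length set0I measure0. Qed.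

Lemma lebesgue_unit_intervalI (A : set R) : measurable A ->
  (0 <= lebesgue_measure (A `&` `[0%R, 1%R[) <= 1)%E.
Proof.
move=> mA; rewrite measure_ge0 /= -lebesgue_unit_interval.
by apply: measureIr => //; exact: measurable_itv.
Qed.

Lemma unit_length01 (A : set R) : measurable A -> 0 <= unit_length A <= 1.
Proof.
move=> /lebesgue_unit_intervalI; rewrite /unit_length.
by case: (lebesgue_measure _) => [r||] //=; rewrite lexx ler01.
Qed.

Lemma unit_length_additive : lam_additive (fun A : set R => measurable A) unit_length.
Proof.
move=> A B mA mB AB.
have fin (C : set R) : measurable C -> lebesgue_measure (C `&` `[0, 1[%classic) \is a fin_num.
  move=> /lebesgue_unit_intervalI /andP[C_ge0 C_le1].
  by rewrite ge0_fin_numE // (le_lt_trans C_le1) // ltry.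
rewrite /unit_length setIUl measureU ?fineD ?fin //; try exact: measurableI.
by rewrite setIACA AB set0I.
Qed.

End UnitInterval.

Section Models.
Variables (R : realType) (P : Type) (pT pF : P).
Variable pref : (pform P -> R) -> (pform P -> R) -> Prop.
Implicit Types (U : pform P -> R) (phi psi : pform P).

Definition additive_model_representable := exists (Omega : Type)
    (t : pform P -> set Omega) (Sigma : set (set Omega)) (lam : set Omega -> R),
  [/\ subjective_model pT pF t Sigma lam, lam_additive Sigma lam,
      t_monotone pT pF t & represents pref t lam].

Definition sound_model_representable := exists (Omega : Type)
    (t : pform P -> set Omega) (Sigma : set (set Omega)) (lam : set Omega -> R),
  [/\ subjective_model pT pF t Sigma lam, lam_monotone Sigma lam,
      t_sound pT pF t & represents pref t lam].

Lemma lam_additive_monotone (Omega : Type) (Sigma : set (set Omega)) (lam : set Omega -> R) :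
  is_field Sigma -> (forall A, Sigma A -> 0 <= lam A) -> lam_additive Sigma lam ->
  lam_monotone Sigma lam.
Proof.
case=> _ SigmaC SigmaU lam_ge0 lam_add A B SA SB AB.
have SBA : Sigma (B `\` A) by rewrite setDE -[B]setCK -setCU; apply/SigmaC/SigmaU/SA/SigmaC.
rewrite -(setDUK AB) lam_add ?lerDl ?lam_ge0 //.
by apply/seteqP; split=> // x [Ax [_]].
Qed.

Lemma subjective_model_utility (Omega : Type) (t : pform P -> set Omega) Sigma lam :
  subjective_model pT pF t Sigma lam -> lam_monotone Sigma lam -> t_monotone pT pF t ->
  represents pref t lam -> monotone_utility pT pF pref (fun phi => lam (t phi)).
Proof.
case=> -[tT tF] _ Sigma_t [_ lam0 lam1] lam_mono t_mono t_rep.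
split=> //; [by rewrite tT | by rewrite tF | by move=> phi psi /t_mono; exact: lam_mono].
Qed.

Lemma additive_model_utility : additive_model_representable ->
  exists U, monotone_utility pT pF pref U.
Proof.
case=> Omega [t [Sigma [lam [model lam_add t_mono t_rep]]]].
have [_ Sigma_field _ [lam01 _ _]] := model.
exists (fun phi => lam (t phi)); apply: (subjective_model_utility model _ t_mono t_rep).
by apply: (lam_additive_monotone Sigma_field _ lam_add) => A /lam01 /andP[].
Qed.

Lemma sound_model_utility : sound_model_representable ->
  exists U, monotone_utility pT pF pref U.
Proof.
case=> Omega [t [Sigma [lam [model lam_mono [_ t_mono _ _] t_rep]]]].
by exists (fun phi => lam (t phi)); apply: (subjective_model_utility model).
Qed.

Lemma utility_additive_model U : monotone_utility pT pF pref U ->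
  additive_model_representable.
Proof.
move=> /[dup] U_util [UT UF U_mono U_rep].
(* [t (Var pT)] has to be the whole line, hence the special case [U phi = 1]. *)
pose t phi : set R := if U phi == 1 then setT else `[0, U phi[%classic.
have tE phi : unit_length (t phi) = U phi.
  rewrite /t; case: eqP => [->|_]; first exact: unit_lengthT.
  by rewrite unit_length_itv // (monotone_utility01 phi U_util).
exists R, t, (fun A : set R => measurable A), (@unit_length R); split.
- split.
  + by rewrite /truth_valuation /t UT UF eqxx eq_sym oner_eq0 set_itvco0.
  + by split=> [|A|A B]; [exact: measurable0 | exact: measurableC | exact: measurableU].
  + by move=> phi; rewrite /t; case: eqP => _; [exact: measurableT | exact: measurable_itv].
  + by split; [exact: unit_length01 | exact: unit_length0 | exact: unit_lengthT].
- exact: unit_length_additive.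
- move=> phi psi /U_mono le_phi_psi; rewrite /t.
  have [//|psi_ne1] := eqVneq (U psi) 1.
  have psi_lt1 : U psi < 1.
    by rewrite lt_neqAle psi_ne1; case/andP: (monotone_utility01 psi U_util).
  rewrite lt_eqF ?(le_lt_trans le_phi_psi) // => x /=.
  by rewrite !in_itv /= => /andP[-> /lt_le_trans->].
- by move=> b b'; rewrite /represents (funext tE); exact: U_rep.
Qed.

Definition valuation := {v : P -> bool | admissible pT pF v}.

Definition valuation_truth phi : set valuation := [set w | evalf (sval w) phi].

Lemma valuation_truth_subset phi psi :
  valuation_truth phi `<=` valuation_truth psi <-> entails pT pF phi psi.
Proof.
by split=> [sub v v_adm|ent [v v_adm]]; [exact: (sub (exist _ v v_adm)) | exact: ent].
Qed.

Lemma valuation_truth_valuation : truth_valuation pT pF valuation_truth.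
Proof.
by split; apply/seteqP; split=> // -[v [vT vF]]; rewrite /valuation_truth /= ?vT ?vF.
Qed.

Lemma valuation_truthU phi psi :
  valuation_truth (Or phi psi) = valuation_truth phi `|` valuation_truth psi.
Proof. by apply/seteqP; split=> w /orP. Qed.

Lemma valuation_truth_sound : t_sound pT pF valuation_truth.
Proof.
split=> [phi psi [ent ent']|phi psi /valuation_truth_subset //|phi|phi psi].
- by apply/seteqP; split; apply/valuation_truth_subset.
- by apply/seteqP; split=> w /negP.
- by apply/seteqP; split=> w /andP.
Qed.

Lemma utility_sound_model U : monotone_utility pT pF pref U -> sound_model_representable.
Proof.
move=> /[dup] U_util [UT UF U_mono U_rep].
pose Sigma := [set A | exists phi, A = valuation_truth phi].
pose lam (A : set valuation) :=
  U (epsilon (inhabits (Var pF)) (fun phi => A = valuation_truth phi)).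
have lamE phi : lam (valuation_truth phi) = U phi.
  have := epsilon_spec (inhabits (Var pF)) (fun psi => valuation_truth phi = valuation_truth psi).
  move=> /(_ (ex_intro _ phi erefl)); rewrite /lam; set psi := epsilon _ _ => e.
  by apply/le_anti/andP; split; apply/U_mono/valuation_truth_subset; rewrite e.
have [tT tF] := valuation_truth_valuation.
exists valuation, valuation_truth, Sigma, lam; split.
- split=> [//||phi|]; last 2 first.
  + by exists phi.
  + split=> [A [phi ->]||]; last by rewrite -tT lamE.
      by rewrite lamE (monotone_utility01 phi U_util).
    by rewrite -tF lamE.
  split=> [|A [phi ->]|A B [phi ->] [psi ->]]; first by exists (Var pF).
    by exists (Neg phi); have [] := valuation_truth_sound.
  by exists (Or phi psi); rewrite valuation_truthU.
- by move=> A B [phi ->] [psi ->] /valuation_truth_subset; rewrite !lamE; exact: U_mono.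
- exact: valuation_truth_sound.
- by move=> b b'; rewrite /represents (funext lamE); exact: U_rep.
Qed.

End Models.

Section VonNeumannMorgenstern.
Variables (R : realType) (P : Type) (pT pF : P).
Variable pref : (pform P -> R) -> (pform P -> R) -> Prop.
Hypotheses (pref_nontrivial : non_triviality pref pT pF) (pref_oeu : objective_EU pref).
Implicit Types (b p q w x y z : pform P -> R) (phi : pform P).

Local Notation bet := (@is_bet R P).
Local Notation T := (pm R (Var pT)).
Local Notation F := (pm R (Var pF)).
Local Notation M a := (mix a T F).
Local Infix "≽" := pref (at level 70).
Local Infix "≻" := (spref pref) (at level 70).

Let pref_total : complete_pref pref. Proof. by case: pref_oeu. Qed.
Let pref_trans : transitive_pref pref. Proof. by case: pref_oeu. Qed.
Let pref_arch : archimedean_pref pref. Proof. by case: pref_oeu. Qed.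
Let pref_indep : independence_pref pref. Proof. by case: pref_oeu. Qed.
Let T_bet : bet T. Proof. exact: is_bet_pm. Qed.
Let F_bet : bet F. Proof. exact: is_bet_pm. Qed.

Definition indiff x y := x ≽ y /\ y ≽ x.

Lemma pref_refl x : bet x -> x ≽ x.
Proof. by move=> x_bet; case: (pref_total x_bet x_bet). Qed.

Lemma not_spref x y : bet x -> bet y -> ~ x ≻ y -> y ≽ x.
Proof.
move=> x_bet y_bet not_xy; case: (pref_total y_bet x_bet) => // xy.
by apply: contrapT => not_yx; apply: not_xy.
Qed.

Lemma spref_asym x y : x ≻ y -> ~ y ≻ x.
Proof. by case=> xy _ [_]. Qed.

Lemma spref_pref_trans x y z : bet x -> bet y -> bet z -> x ≻ y -> y ≽ z -> x ≻ z.
Proof.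
move=> x_bet y_bet z_bet [xy not_yx] yz; split; first exact: (pref_trans x_bet y_bet).
by move=> zx; apply: not_yx; exact: (pref_trans y_bet z_bet).
Qed.

Lemma pref_spref_trans x y z : bet x -> bet y -> bet z -> x ≽ y -> y ≻ z -> x ≻ z.
Proof.
move=> x_bet y_bet z_bet xy [yz not_zy]; split; first exact: (pref_trans x_bet y_bet).
by move=> zx; apply: not_zy; exact: (pref_trans z_bet x_bet).
Qed.

Lemma is_bet_scale a : 0 <= a <= 1 -> bet (M a).
Proof. by move=> a01; exact: is_bet_mix a01 T_bet F_bet. Qed.

Lemma spref_TF : T ≻ F.
Proof. by case: pref_nontrivial. Qed.

Lemma spref_mixl x y e : bet x -> bet y -> 0 < e <= 1 -> x ≻ y -> mix e x y ≻ y.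
Proof. by move=> x_bet y_bet e01 /(pref_indep x_bet y_bet y_bet e01); rewrite mix_idem. Qed.

Lemma spref_mixr x y e : bet x -> bet y -> 0 < e <= 1 -> y ≻ x -> y ≻ mix e x y.
Proof. by move=> x_bet y_bet e01 /(pref_indep y_bet x_bet y_bet e01); rewrite mix_idem. Qed.

Lemma mix_spref_not_spref x y z : bet x -> bet y -> bet z ->
  (forall e, 0 < e <= 1 -> mix e x z ≻ y) -> ~ y ≻ z.
Proof.
move=> x_bet y_bet z_bet above yz.
have xy : x ≻ y by rewrite -(mix1 x z); apply: above; rewrite ltr01 lexx.
have [_ [c [_ /andP[c0 c1] _ below]]] := pref_arch x_bet y_bet z_bet xy yz.
by apply: spref_asym below (above c _); rewrite c0 ltW.
Qed.

Lemma spref_mix_not_spref x y z : bet x -> bet y -> bet z ->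
  (forall e, 0 < e <= 1 -> y ≻ mix e x z) -> ~ z ≻ y.
Proof.
move=> x_bet y_bet z_bet below zy.
have yx : y ≻ x by rewrite -(mix1 x z); apply: below; rewrite ltr01 lexx.
have [a [_ [/andP[a0 a1] _ above _]]] := pref_arch z_bet y_bet x_bet zy yx.
apply: spref_asym (below (1 - a) _) _; first by apply/andP; split; lra.
by rewrite mixC opprB addrC subrK.
Qed.

(* Independence is only assumed for strict preference; its weak form follows by
   the Archimedean axiom, applied to mixtures with [T] or with [F]. *)
Lemma pref_mixl p q w l : bet p -> bet q -> bet w -> 0 <= l <= 1 -> p ≽ q ->
  mix l p w ≽ mix l q w.
Proof.
move=> p_bet q_bet w_bet l01 pq.
have [->|l_ne0] := eqVneq l 0; first by rewrite !mix0; exact: pref_refl.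
have l_gt0 : 0 < l <= 1 by rewrite lt_def l_ne0; case/andP: l01 => -> ->.
have pw_bet := is_bet_mix l01 p_bet w_bet; have qw_bet := is_bet_mix l01 q_bet w_bet.
have mixT_bet e : 0 < e <= 1 -> bet (mix e T p).
  by move=> /andP[/ltW e0 e1]; apply: is_bet_mix; rewrite ?e0.
have mixF_bet e : 0 < e <= 1 -> bet (mix e F q).
  by move=> /andP[/ltW e0 e1]; apply: is_bet_mix; rewrite ?e0.
apply: not_spref => // qw_pw.
have qp : q ≽ p.
  by apply: not_spref => // /(pref_indep p_bet q_bet w_bet l_gt0); exact: spref_asym.
have [Tp|not_Tp] := pselect (T ≻ p).
- apply: (mix_spref_not_spref (is_bet_mix l01 T_bet w_bet) qw_bet pw_bet _ qw_pw).
  move=> e e01; rewrite mix_mixl; apply: (pref_indep (mixT_bet e e01) q_bet w_bet l_gt0).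
  exact: spref_pref_trans (mixT_bet e e01) p_bet q_bet (spref_mixl T_bet p_bet e01 Tp) pq.
- have p_F : p ≻ F.
    exact: pref_spref_trans p_bet T_bet F_bet (not_spref T_bet p_bet not_Tp) spref_TF.
  have q_F : q ≻ F := pref_spref_trans q_bet p_bet F_bet qp p_F.
  apply: (spref_mix_not_spref (is_bet_mix l01 F_bet w_bet) pw_bet qw_bet _ qw_pw).
  move=> e e01; rewrite mix_mixl; apply: (pref_indep p_bet (mixF_bet e e01) w_bet l_gt0).
  exact: pref_spref_trans p_bet q_bet (mixF_bet e e01) pq (spref_mixr F_bet q_bet e01 q_F).
Qed.

Lemma pref_mixr p q w l : bet p -> bet q -> bet w -> 0 <= l <= 1 -> p ≽ q ->
  mix l w p ≽ mix l w q.
Proof.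
move=> p_bet q_bet w_bet /andP[l0 l1] pq; rewrite !(mixC l w).
by apply: pref_mixl => //; apply/andP; split; lra.
Qed.

Lemma indiff_mix l x x' y y' : bet x -> bet x' -> bet y -> bet y' -> 0 <= l <= 1 ->
  indiff x x' -> indiff y y' -> indiff (mix l x y) (mix l x' y').
Proof.
move=> x_bet x'_bet y_bet y'_bet l01 [xx' x'x] [yy' y'y].
have xy := is_bet_mix l01 x_bet y_bet; have x'y := is_bet_mix l01 x'_bet y_bet.
have x'y' := is_bet_mix l01 x'_bet y'_bet.
split; apply: (pref_trans _ x'y) => //; by [apply: pref_mixl | apply: pref_mixr].
Qed.

Lemma spref_scale a c : 0 <= a -> a < c -> c <= 1 -> M c ≻ M a.
Proof.
move=> a0 ac c1; have c0 : 0 < c := le_lt_trans a0 ac.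
have c_F : M c ≻ F by apply: spref_mixl T_bet F_bet _ spref_TF; rewrite c0.
have -> : M a = mix (1 - a / c) F (M c).
  by apply/funext => phi; rewrite /mix; field; rewrite gt_eqF.
apply: spref_mixr F_bet (is_bet_scale _) _ c_F; first by rewrite ltW.
have ac_lt1 : a / c < 1 by rewrite ltr_pdivrMr // mul1r.
have ac_ge0 : 0 <= a / c by rewrite divr_ge0 // ltW.
by apply/andP; split; lra.
Qed.

Lemma pref_scale a c : 0 <= a <= 1 -> 0 <= c <= 1 -> M c ≽ M a <-> a <= c.
Proof.
move=> /andP[a0 a1] /andP[c0 c1]; split=> [ca|ac].
  by rewrite leNgt; apply/negP => /spref_scale-/(_ c0 a1) [].
have [->|a_ne_c] := eqVneq a c; first by apply/pref_refl/is_bet_scale; rewrite c0.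
by case: (spref_scale a0 _ c1) => //; rewrite lt_neqAle a_ne_c.
Qed.

Lemma indiff_scale_eq a c : 0 <= a <= 1 -> 0 <= c <= 1 -> indiff (M a) (M c) -> a = c.
Proof.
by move=> a01 c01 [/(pref_scale c01 a01) ca /(pref_scale a01 c01) ac]; apply/le_anti/andP.
Qed.

Lemma scale_indiff_strict x : bet x -> T ≻ x -> x ≻ F ->
  exists2 u, 0 <= u <= 1 & indiff x (M u).
Proof.
move=> x_bet T_x x_F.
pose S := [set a : R | 0 <= a <= 1 /\ x ≽ M a].
have S0 : S 0 by split; [rewrite lexx ler01 | rewrite mix0; case: x_F].
have S_ub : ubound S 1 by move=> a [/andP[_]].
have S_bnd : has_ubound S by exists 1.
pose u := sup S.
have u0 : 0 <= u := ub_le_sup S_bnd S0.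
have u1 : u <= 1 := ge_sup (ex_intro _ 0 S0) S_ub.
have u01 : 0 <= u <= 1 by rewrite u0 u1.
have u_bet := is_bet_scale u01.
exists u => //; split; apply: not_spref => //.
- move=> Mu_x.
  have [a [_ [/andP[a0 a1] _ above _]]] := pref_arch u_bet x_bet F_bet Mu_x x_F.
  have Mau : mix a (M u) F = M (a * u) by apply/funext => phi; rewrite /mix; ring.
  rewrite Mau in above.
  have au01 : 0 <= a * u <= 1 by apply/andP; split; nra.
  have u_le : u <= a * u.
    apply: ge_sup => [|s [s01 x_s]]; first by exists 0.
    rewrite leNgt; apply/negP => au_s; apply: spref_asym above _.
    have [/andP[au0 _] /andP[_ s1]] := (au01, s01).
    exact: pref_spref_trans x_bet (is_bet_scale s01) (is_bet_scale au01) x_s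
      (spref_scale au0 au_s s1).
  have u_eq0 : u = 0 by nra.
  by apply: spref_asym x_F _; rewrite -(mix0 T F) -u_eq0.
- move=> x_Mu.
  have [_ [c [_ /andP[c0 c1] _ below]]] := pref_arch T_bet x_bet u_bet T_x x_Mu.
  have Mcu : mix c T (M u) = M (c + (1 - c) * u).
    by apply/funext => phi; rewrite /mix; ring.
  rewrite Mcu in below.
  have cu01 : 0 <= c + (1 - c) * u <= 1 by apply/andP; split; nra.
  have cu_le : c + (1 - c) * u <= u by apply: ub_le_sup => //; split => //; case: below.
  have u_eq1 : u = 1 by nra.
  by apply: spref_asym T_x _; rewrite -(mix1 T F) -u_eq1.
Qed.

Lemma scale_indiff x : bet x -> T ≽ x -> x ≽ F -> exists2 u, 0 <= u <= 1 & indiff x (M u).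
Proof.
move=> x_bet T_x x_F.
have [x_sF|not_x_sF] := pselect (x ≻ F); last first.
  by exists 0; rewrite ?lexx ?ler01 // mix0; split=> //; exact: not_spref.
have [T_sx|not_T_sx] := pselect (T ≻ x); first exact: scale_indiff_strict.
by exists 1; rewrite ?lexx ?ler01 // mix1; split=> //; exact: not_spref.
Qed.

Definition vnm_utility phi : R :=
  epsilon (inhabits 0) (fun u => 0 <= u <= 1 /\ indiff (pm R phi) (M u)).

Lemma vnm_utility_spec phi :
  0 <= vnm_utility phi <= 1 /\ indiff (pm R phi) (M (vnm_utility phi)).
Proof.
apply: (epsilon_spec (inhabits 0) (fun u => 0 <= u <= 1 /\ indiff (pm R phi) (M u))).
have [T_phi phi_F] := pref_nontrivial.1 phi.
by have [u] := scale_indiff (is_bet_pm R phi) T_phi phi_F; exists u.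
Qed.

Lemma vnm_utility01 phi : 0 <= vnm_utility phi <= 1.
Proof. by case: (vnm_utility_spec phi). Qed.

Lemma indiff_scale_eu b : bet b -> indiff b (M (eu b vnm_utility)).
Proof.
move=> b_bet; move: (is_bet_supp b_bet); move: (supp b) => s.
elim: s b b_bet => [|phi s IH] b b_bet s_supp.
  by move: (sum_is_bet b_bet s_supp); rewrite big_nil => /eqP; rewrite eq_sym oner_eq0.
have [b0|b_ne0] := eqVneq (b phi) 0; first exact: IH b_bet (is_supp_cons0 s_supp b0).
have [b1|b_ne1] := eqVneq (b phi) 1.
  by rewrite (bet_pm b_bet b1) eu_pm; case: (vnm_utility_spec phi).
have [rest_bet rest_supp] := is_bet_rest b_bet s_supp b_ne1.
have b01 : 0 <= b phi <= 1 by case: b_bet.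
rewrite {1 2}(bet_restE b_ne1).
rewrite (eu_mix _ b01 (is_bet_pm _ _) rest_bet) eu_pm.
have -> : M (b phi * vnm_utility phi + (1 - b phi) * eu (bet_rest b phi) vnm_utility)
    = mix (b phi) (M (vnm_utility phi)) (M (eu (bet_rest b phi) vnm_utility)).
  by apply/funext => psi; rewrite /mix; ring.
have rest_scale_bet := is_bet_scale (eu01 rest_bet vnm_utility01).
apply: (indiff_mix (is_bet_pm _ _) (is_bet_scale (vnm_utility01 phi)) rest_bet rest_scale_bet b01).
  by case: (vnm_utility_spec phi).
exact: IH rest_bet rest_supp.
Qed.

Lemma vnm_utility_represents : eu_represents pref vnm_utility.
Proof.
move=> b b' b_bet b'_bet.
have [[bM Mb] [b'M Mb']] := (indiff_scale_eu b_bet, indiff_scale_eu b'_bet).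
have eu_bet c : bet c -> bet (M (eu c vnm_utility)).
  by move=> c_bet; apply/is_bet_scale/eu01 => //; exact: vnm_utility01.
rewrite -pref_scale ?eu01 //; last 2 first.
- exact: vnm_utility01.
- exact: vnm_utility01.
have [Mb_bet Mb'_bet] := (eu_bet _ b_bet, eu_bet _ b'_bet).
split=> pref_bb'.
- apply: (pref_trans Mb_bet b_bet Mb'_bet Mb).
  exact: pref_trans b_bet b'_bet Mb'_bet pref_bb' b'M.
- apply: (pref_trans b_bet Mb_bet b'_bet bM).
  exact: pref_trans Mb_bet Mb'_bet b'_bet pref_bb' Mb'.
Qed.

Lemma vnm_monotone_utility : implication_ax pref pT pF ->
  monotone_utility pT pF pref vnm_utility.
Proof.
move=> pref_impl; split; last exact: vnm_utility_represents.
- apply: (indiff_scale_eq (vnm_utility01 _) (_ : 0 <= 1 <= 1)); first by rewrite ler01 lexx.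
  by rewrite mix1; have [_ []] := vnm_utility_spec (Var pT).
- apply: (indiff_scale_eq (vnm_utility01 _) (_ : 0 <= 0 <= 1)); first by rewrite lexx ler01.
  by rewrite mix0; have [_ []] := vnm_utility_spec (Var pF).
- move=> phi psi /pref_impl.
  by rewrite (vnm_utility_represents (is_bet_pm _ _) (is_bet_pm _ _)) !eu_pm.
Qed.

End VonNeumannMorgenstern.

Lemma axioms_iff_utility (R : realType) (P : Type) (pT pF : P)
    (pref : (pform P -> R) -> (pform P -> R) -> Prop) :
  [/\ non_triviality pref pT pF, objective_EU pref & implication_ax pref pT pF] <->
  exists U, monotone_utility pT pF pref U.
Proof.
split=> [[pref_nontrivial pref_oeu pref_impl]|[U]]; last exact: monotone_utility_axioms.
by exists (vnm_utility pT pF pref); exact: vnm_monotone_utility.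
Qed.

Theorem proposition3 (R : realType) (P : Type) (pT pF : P) (hTF : pT <> pF)
    (pref : (pform P -> R) -> (pform P -> R) -> Prop) :
  let c1 := [/\ non_triviality pref pT pF, objective_EU pref & implication_ax pref pT pF] in
  let c2 := exists (Omega : Type) (t : pform P -> set Omega)
              (Sigma : set (set Omega)) (lam : set Omega -> R),
              [/\ subjective_model pT pF t Sigma lam, lam_additive Sigma lam,
                  t_monotone pT pF t & represents pref t lam] in
  let c3 := exists (Omega' : Type) (t' : pform P -> set Omega')
              (Sigma' : set (set Omega')) (lam' : set Omega' -> R),
              [/\ subjective_model pT pF t' Sigma' lam', lam_monotone Sigma' lam',
                  t_sound pT pF t' & represents pref t' lam'] in
  (c1 <-> c2) /\ (c2 <-> c3).
Proof.
have c1_utility := axioms_iff_utility pT pF pref.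
have c2_utility : additive_model_representable pT pF pref <->
    exists U, monotone_utility pT pF pref U.
  by split=> [|[U]]; [exact: additive_model_utility | exact: utility_additive_model].
have c3_utility : sound_model_representable pT pF pref <->
    exists U, monotone_utility pT pF pref U.
  by split=> [|[U]]; [exact: sound_model_utility | exact: utility_sound_model].
exact: (conj (iff_trans c1_utility (iff_sym c2_utility))
             (iff_trans c2_utility (iff_sym c3_utility))).
Qed.
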